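(* Let $n\ge1$ and let $A$ be a set with an $(n+1)$-ary operation $\theta$, binary operations $\alpha_1,\dots,\alpha_n$ and elements $e_1,\dots,e_n$ such that $\alpha_i(a,a)=e_i$ and $\theta(\alpha_1(a,b),\dots,\alpha_n(a,b),b)=a$ for all $a,b\in A$, and suppose $\theta$ is 2-associative, i.e. $\theta(a_1,\dots,a_n,\theta(b_1,\dots,b_n,c))=\theta(\theta(a_1,\dots,a_n,b_1),\dots,\theta(a_1,\dots,a_n,b_n),c)$ for all elements. Then for any $b,c\in A$ there is $a\in A$ with $\theta(a,a,\dots,a,b)=c$; one can take $$a=\theta\big(\alpha_1(c,\theta(b,b,\dots,b)),\alpha_2(c,\theta(b,b,\dots,b)),\dots,\alpha_n(c,\theta(b,b,\dots,b)),b\big).$$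
   Context: $\theta(b,b,\dots,b)$ denotes $\theta$ applied to $n+1$ copies of $b$; $\theta(a,\dots,a,b)$ has $a$ in the first $n$ arguments. *)

From mathcomp Require Import all_boot.
Set Implicit Arguments. Unset Strict Implicit. Unset Printing Implicit Defensive.

(* An (n+1)-ary operation theta on A is represented in curried form
   theta : ('I_n -> A) -> A -> A : theta x c = theta(x_0, ..., x_{n-1}, c). *)

Definition two_associative (A : Type) (n : nat)
  (theta : ('I_n -> A) -> A -> A) : Prop :=
  forall (a b : 'I_n -> A) (c : A),
    theta a (theta b c) = theta (fun i => theta a (b i)) c.

From mathcomp Require Import all_boot.

Lemma two_associative_const_left (A : Type) (n : nat)
    (theta : ('I_n -> A) -> A -> A) (x : 'I_n -> A) (b : A) :
  two_associative theta ->
  theta (fun _ => theta x b) b = theta x (theta (fun _ => b) b).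
Proof. by move=> hassoc; rewrite hassoc. Qed.

Theorem lemma4p1 (A : Type) (n : nat) (hn : 1 <= n)
  (theta : ('I_n -> A) -> A -> A)
  (alpha : 'I_n -> A -> A -> A) (e : 'I_n -> A)
  (halpha_diag : forall (i : 'I_n) (a : A), alpha i a a = e i)
  (hrecover : forall a b : A, theta (fun i => alpha i a b) b = a)
  (hassoc : two_associative theta) :
  forall b c : A,
    (exists a : A, theta (fun _ => a) b = c) /\
    (let bb := theta (fun _ => b) b in
     let a := theta (fun i => alpha i c bb) b in
     theta (fun _ => a) b = c).
Proof.
move=> b c.
have solves : theta (fun _ => theta (fun i => alpha i c (theta (fun _ => b) b)) b) b = c.
  by rewrite two_associative_const_left // hrecover.
by split; [exists (theta (fun i => alpha i c (theta (fun _ => b) b)) b) | ].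
Qed.
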